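(* Let $\mathbf{k}$ be a field and $m\ge2$. Let $u\in{\sf{Bir}}(\mathbb{P}^m_\mathbf{k})$ be a diagonal linear transformation, $u(x_1,\dots,x_m)=(u_1x_1,\dots,u_mx_m)$ in affine coordinates, with $u_i\in\mathbf{k}^\times$. Then $u$ is at least exponentially distorted in ${\sf{Bir}}(\mathbb{P}^m_\mathbf{k})$: there is a finitely generated subgroup $\Gamma\le{\sf{Bir}}(\mathbb{P}^m_\mathbf{k})$ containing $u$ with $\exp(n)\preceq\delta^\Gamma_u(n)$ (where $\delta^\Gamma_u=\infty$ if $u$ has finite order).
   Context: For functions, $f\preceq g$ means there are $C,C',C''>0$ with $f(x)\le Cg(C'x)+C''$. For a finitely generated group $\Gamma$ with finite symmetric generating set $S\ni1$ and $c\in\Gamma$, $\delta_{c,S}(n)=\sup\{m\in\mathbf{N}: c^m\in S^n\}$; its $\simeq$-class $\delta^\Gamma_c$ is independent of $S$. *)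

From HB Require Import structures.
From mathcomp Require Import all_boot all_order all_algebra.
Set Implicit Arguments. Unset Strict Implicit. Unset Printing Implicit Defensive.
Import Order.TTheory GRing.Theory Num.Theory.
Local Open Scope ring_scope.

(* Polynomial ring k[x_0,...,x_{m-1}] as iterated univariate polynomials:
   mpoly R (m+1) = (mpoly R m)[x_m]. *)
Fixpoint mpoly (R : idomainType) (m : nat) : idomainType :=
  match m with
  | 0 => R
  | m'.+1 => ({poly mpoly R m'} : idomainType)
  end.

Fixpoint mvar (R : idomainType) (m : nat) : nat -> mpoly R m :=
  match m return nat -> mpoly R m with
  | 0 => fun _ => 0
  | m'.+1 => fun i => if i == m' then 'X else (mvar R m' i)%:P
  end.

Fixpoint mconst (R : idomainType) (m : nat) : R -> mpoly R m :=
  match m return R -> mpoly R m with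
  | 0 => fun c => c
  | m'.+1 => fun c => (mconst m' c)%:P
  end.

(* Function field k(P^m) = k(x_0,...,x_{m-1}). *)
Definition ratfun (k : fieldType) (m : nat) : fieldType := {fraction (mpoly k m)}.

Definition rvar (k : fieldType) (m : nat) (i : nat) : ratfun k m :=
  tofrac (mvar k m i).
Definition rconst (k : fieldType) (m : nat) (c : k) : ratfun k m :=
  tofrac (mconst m c).

(* Bir(P^m_k) is (anti-)isomorphic to the group of k-automorphisms of k(P^m);
   an element is represented by the (comorphism) field automorphism. *)
Definition is_bir (k : fieldType) (m : nat) (f : ratfun k m -> ratfun k m) : Prop :=
  [/\ f 1 = 1,
      forall x y, f (x + y) = f x + f y,
      forall x y, f (x * y) = f x * f y,
      bijective f &
      forall c : k, f (rconst m c) = rconst m c].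

Definition word (T : Type) (N : nat) (S : 'I_N -> T -> T) (w : seq 'I_N) : T -> T :=
  foldr (fun i g => S i \o g) id w.

(* Fix coordinates i <> j, let s swap x_i and x_j,
   and let E send x_j to x_j x_i.  Conjugation by the monomial map G = E s E s acts on diagonal
   maps whose exponents are supported on (x_j, x_i) through the hyperbolic matrix
   M = [[2, -1], [-1, 1]] on the exponent vector (and through M^-1 for G^-1).  So if D
   multiplies x_j by a, then G^t D G^-t G^-t D G^t multiplies x_j by a^N, where N >= 2^t is the
   first coordinate of M^t e_1 + M^-t e_1, the second coordinates cancelling by symmetry.
   Moving this to each coordinate l by the transposition of x_l and x_j and multiplying over l
   writes u^N as a word of length O(t) in a fixed finite set of generators; t = 2n then gives
   3^n <= 4^n <= N. *)

From HB Require Import structures.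
(* Imported first, so that [repr] below is the quotient representative, not fingroup's. *)
From mathcomp Require Import fingroup perm.
From mathcomp Require Import all_boot all_order all_algebra zify.
Import GRing.Theory.
Set Implicit Arguments. Unset Strict Implicit.
Local Open Scope ring_scope.
Local Open Scope quotient_scope.

(** * Extending injective ring morphisms to fraction fields *)

Lemma frac_reprE (R : idomainType) (x : {fraction R}) :
  x = tofrac \n_(repr x) / tofrac \d_(repr x).
Proof.
rewrite -{1}[x]reprK; move: (repr x) => r.
rewrite !piE; apply/eqmodP; rewrite /= FracField.equivfE /FracField.mulf /FracField.invf.
rewrite !numden_Ratio ?oner_eq0 ?mulf_neq0 ?oner_eq0 ?denom_ratioP //.
by rewrite mulr1 mul1r mulrC.
Qed.

Section FracLift.
Variables (R : idomainType) (L : fieldType) (phi : {rmorphism R -> L}).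
Hypothesis phi_inj : injective phi.

Definition frac_lift (x : {fraction R}) : L := phi \n_(repr x) / phi \d_(repr x).

Lemma frac_lift_div a b : b != 0 -> frac_lift (tofrac a / tofrac b) = phi a / phi b.
Proof.
move=> b0; rewrite /frac_lift; set x := tofrac a / tofrac b.
have d0 : \d_(repr x) != 0 := denom_ratioP _.
have /eqP : tofrac a / tofrac b = tofrac \n_(repr x) / tofrac \d_(repr x) by rewrite -frac_reprE.
rewrite eqr_div ?tofrac_eq0 // -!tofracM tofrac_eq => /eqP e.
by apply/eqP; rewrite eqr_div ?(raddf_eq0 _ phi_inj) // -!rmorphM e.
Qed.

Lemma frac_lift_tofrac a : frac_lift (tofrac a) = phi a.
Proof. by rewrite -[tofrac a]divr1 -tofrac1 frac_lift_div ?oner_eq0 // rmorph1 divr1. Qed.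

Lemma frac_lift_is_zmod_morphism : zmod_morphism frac_lift.
Proof.
move=> x y; rewrite [x]frac_reprE [y]frac_reprE.
set a := \n_ _; set b := \d_ _; set c := \n_ _; set d := \d_ _.
have b0 : b != 0 := denom_ratioP _; have d0 : d != 0 := denom_ratioP _.
have tb0 : tofrac b != 0 by rewrite tofrac_eq0.
have td0 : tofrac d != 0 by rewrite tofrac_eq0.
have pb0 : phi b != 0 by rewrite (raddf_eq0 _ phi_inj).
have pd0 : phi d != 0 by rewrite (raddf_eq0 _ phi_inj).
rewrite -mulNr -tofracN (@addf_div _ _ _ _ _ tb0 td0) -!tofracM -tofracD.
rewrite !frac_lift_div ?mulf_neq0 //.
by rewrite rmorphD !rmorphM rmorphN -mulNr addf_div.
Qed.

Lemma frac_lift_is_monoid_morphism : monoid_morphism frac_lift.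
Proof.
split; first by rewrite -tofrac1 frac_lift_tofrac rmorph1.
move=> x y; rewrite [x]frac_reprE [y]frac_reprE.
set a := \n_ _; set b := \d_ _; set c := \n_ _; set d := \d_ _.
have b0 : b != 0 := denom_ratioP _; have d0 : d != 0 := denom_ratioP _.
by rewrite mulf_div -!tofracM !frac_lift_div ?mulf_neq0 // !rmorphM mulf_div.
Qed.

HB.instance Definition _ := GRing.isZmodMorphism.Build _ _ frac_lift frac_lift_is_zmod_morphism.
HB.instance Definition _ := GRing.isMonoidMorphism.Build _ _ frac_lift frac_lift_is_monoid_morphism.
Definition frac_liftR : {rmorphism {fraction R} -> L} := frac_lift.
End FracLift.

(** * Substitutions in k(x_0, ..., x_(m-1)) *)

Section MultivariateEvaluation.
Variables (k : fieldType) (F : comNzRingType) (c0 : {rmorphism k -> F}) (v : nat -> F).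

Fixpoint meval (m : nat) : {rmorphism mpoly k m -> F} :=
  match m return {rmorphism mpoly k m -> F} with
  | 0 => c0
  | m'.+1 => horner_morph (fun p => mulrC (v m') (meval m' p))
  end.

Lemma meval_mvar m i : (i < m)%N -> meval m (mvar k m i) = v i.
Proof.
elim: m => [//|m IH] /=; rewrite ltnS leq_eqVlt => /orP [/eqP ->|lt].
  by rewrite eqxx horner_morphX.
by rewrite (ltn_eqF lt) horner_morphC IH.
Qed.

Lemma meval_mconst m c : meval m (mconst m c) = c0 c.
Proof. by elim: m => [//|m IH] /=; rewrite horner_morphC IH. Qed.

End MultivariateEvaluation.

Fixpoint mconstR (k : fieldType) (m : nat) : {rmorphism k -> mpoly k m} :=
  match m return {rmorphism k -> mpoly k m} with
  | 0 => idfun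
  | m'.+1 => polyC \o mconstR k m'
  end.

Lemma mconstRE k m c : mconstR k m c = mconst m c.
Proof. by elim: m => [//|m IH] /=; rewrite IH. Qed.

Lemma mpoly_rmorph_eq (k : fieldType) (F : nzRingType) m (f g : {rmorphism mpoly k m -> F}) :
  (forall c, f (mconst m c) = g (mconst m c)) ->
  (forall i, (i < m)%N -> f (mvar k m i) = g (mvar k m i)) -> f =1 g.
Proof.
elim: m f g => [|m IH] f g hc hv; first exact: hc.
have fg_polyC : (f \o polyC : {rmorphism _ -> _}) =1 (g \o polyC : {rmorphism _ -> _}).
  apply: IH => [c|i lt]; first exact: (hc c).
  by have := hv i (ltnW lt) => /=; rewrite (ltn_eqF lt).
move=> p; rewrite (poly_initial f) (poly_initial g) /horner_morph.
have := hv m (ltnSn m); rewrite /= eqxx => ->.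
by rewrite (eq_map_poly fg_polyC).
Qed.

Lemma mvar_neq0 (k : fieldType) m i : (i < m)%N -> mvar k m i != 0.
Proof.
elim: m => [//|m IH] /=; rewrite ltnS leq_eqVlt => /orP [/eqP ->|lt].
  by rewrite eqxx polyX_eq0.
by rewrite (ltn_eqF lt) polyC_eq0 IH.
Qed.

Section FunctionField.
Variables (k : fieldType) (m : nat).
Local Notation K := (ratfun k m).
Local Notation X := (rvar k m).
Local Notation C := (@rconst k m).

Definition rconstR : {rmorphism k -> K} := @tofrac (mpoly k m) \o mconstR k m.

Lemma rconstRE c : rconstR c = C c.
Proof. by rewrite /= mconstRE. Qed.

Lemma rvar_neq0 (i : 'I_m) : X i != 0.
Proof. by rewrite tofrac_eq0 mvar_neq0. Qed.

Definition is_kendo (f : K -> K) :=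
  [/\ f 1 = 1, {morph f : x y / x + y}, {morph f : x y / x * y} & forall c, f (C c) = C c].

Section KEndo.
Variables (f : K -> K) (hf : is_kendo f).

Lemma kendo_nmod_morphism : nmod_morphism f.
Proof.
case: hf => _ fD _ _; split=> //.
by apply: (addrI (f 0)); rewrite -fD !addr0.
Qed.

Lemma kendo_monoid_morphism : monoid_morphism f.
Proof. by case: hf. Qed.

Definition kendoR : {rmorphism K -> K} :=
  HB.pack f (GRing.isNmodMorphism.Build _ _ f kendo_nmod_morphism)
    (GRing.isMonoidMorphism.Build _ _ f kendo_monoid_morphism).

Lemma kendo_const c : f (C c) = C c.
Proof. by case: hf. Qed.

Lemma kendo_mul x y : f (x * y) = f x * f y.
Proof. by case: hf. Qed.

Lemma kendo_div x y : f (x / y) = f x / f y.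
Proof. exact: (fmorph_div kendoR). Qed.

End KEndo.

Lemma kendo_id : is_kendo id.
Proof. by []. Qed.

Lemma kendo_comp f g : is_kendo f -> is_kendo g -> is_kendo (f \o g).
Proof.
by case=> f1 fD fM fC [g1 gD gM gC]; split=> [|x y|x y|c] /=; rewrite ?g1 ?gD ?gM ?gC.
Qed.

Lemma kendo_eq f g : is_kendo f -> is_kendo g ->
  (forall i : 'I_m, f (X i) = g (X i)) -> f =1 g.
Proof.
move=> hf hg fg x.
have fg_tofrac : (kendoR hf \o @tofrac (mpoly k m) : {rmorphism _ -> _})
    =1 (kendoR hg \o @tofrac (mpoly k m) : {rmorphism _ -> _}).
  apply: mpoly_rmorph_eq => [c|i lt] /=.
    by change (f (C c) = g (C c)); rewrite !kendo_const.
  exact: (fg (Ordinal lt)).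
rewrite [x]frac_reprE !kendo_div //.
by have := fg_tofrac \n_(repr x); have := fg_tofrac \d_(repr x) => /= -> ->.
Qed.

Lemma bir_kendo f : is_bir f -> is_kendo f.
Proof. by case. Qed.

Lemma kendo_bir f g : is_kendo f -> is_kendo g -> cancel f g -> cancel g f -> is_bir f.
Proof. by case=> f1 fD fM fC _ fg gf; split=> //; exists g. Qed.

Definition reval (v : 'I_m -> K) : {rmorphism mpoly k m -> K} :=
  meval rconstR (fun l => oapp v 0 (insub l)) m.

Lemma reval_mvar v (i : 'I_m) : reval v (mvar k m i) = v i.
Proof. by rewrite /reval meval_mvar // valK. Qed.

Lemma reval_mconst v c : reval v (mconst m c) = C c.
Proof. by rewrite /reval meval_mconst rconstRE. Qed.

Definition alg_indep (v : 'I_m -> K) := injective (reval v).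

Definition msubst (v : 'I_m -> K) : K -> K := frac_lift (reval v).

Lemma msubst_kendo v : alg_indep v -> is_kendo (msubst v).
Proof.
move=> hv; split.
- exact: (rmorph1 (frac_liftR hv)).
- exact: (rmorphD (frac_liftR hv)).
- exact: (rmorphM (frac_liftR hv)).
by move=> c; rewrite /msubst /rconst frac_lift_tofrac // reval_mconst.
Qed.

Lemma msubst_rvar v (i : 'I_m) : alg_indep v -> msubst v (X i) = v i.
Proof. by move=> hv; rewrite /msubst frac_lift_tofrac // reval_mvar. Qed.

Lemma msubst_ext (v v' : 'I_m -> K) : v =1 v' -> msubst v =1 msubst v'.
Proof.
move=> vv' x; have e : reval v =1 reval v'.
  apply: mpoly_rmorph_eq => [c|i lt]; first by rewrite !reval_mconst.
  by rewrite -[i]/(val (Ordinal lt)) !reval_mvar.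
by rewrite /msubst /frac_lift !e.
Qed.

Lemma alg_indep_linv (v : 'I_m -> K) g : is_kendo g -> (forall i, g (v i) = X i) -> alg_indep v.
Proof.
move=> hg gv; have e : (kendoR hg \o reval v : {rmorphism _ -> _}) =1 @tofrac (mpoly k m).
  apply: mpoly_rmorph_eq => [c|i lt] /=.
    by rewrite reval_mconst; case: hg => _ _ _ ->; rewrite /rconst.
  by rewrite -[i]/(val (Ordinal lt)) reval_mvar gv.
by move=> a b ab; apply/eqP; rewrite -tofrac_eq -!e /= ab.
Qed.

Lemma alg_indep_poly (v v' : 'I_m -> K) (w : 'I_m -> mpoly k m) :
  (forall i, v i = tofrac (w i)) -> (forall i, reval v' (w i) = X i) -> alg_indep v.
Proof.
move=> vw v'w.
pose pw : {rmorphism mpoly k m -> mpoly k m} := meval (mconstR k m) (fun l => oapp w 0 (insub l)) m.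
have pw_mvar (i : 'I_m) : pw (mvar k m i) = w i by rewrite meval_mvar // valK.
have e1 : reval v =1 (@tofrac (mpoly k m) \o pw : {rmorphism _ -> _}).
  apply: mpoly_rmorph_eq => [c|i lt] /=; first by rewrite reval_mconst meval_mconst mconstRE.
  by rewrite -[i]/(val (Ordinal lt)) reval_mvar pw_mvar.
have e2 : (reval v' \o pw : {rmorphism _ -> _}) =1 @tofrac (mpoly k m).
  apply: mpoly_rmorph_eq => [c|i lt] /=; first by rewrite meval_mconst mconstRE reval_mconst.
  by rewrite -[i]/(val (Ordinal lt)) pw_mvar v'w.
move=> a b; rewrite !e1 /= => /eqP; rewrite tofrac_eq => /eqP ab.
by apply/eqP; rewrite -tofrac_eq -!e2 /= ab.
Qed.
End FunctionField.

(** * Diagonal, permutation and monomial maps *)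

Section MonomialMaps.
Variables (k : fieldType) (m : nat).
Local Notation K := (ratfun k m).
Local Notation X := (rvar k m).
Local Notation C := (@rconst k m).

Lemma rconstM a b : C (a * b) = C a * C b.
Proof. by rewrite -!rconstRE rmorphM. Qed.

Lemma rconstV a : C a^-1 = (C a)^-1.
Proof. by rewrite -!rconstRE fmorphV. Qed.

Lemma rconst1 : C 1 = 1.
Proof. by rewrite -rconstRE rmorph1. Qed.

Section Dilation.
Variable c : 'I_m -> k.
Hypothesis c_neq0 : forall l, c l != 0.

Definition dil : K -> K := msubst (fun l => C (c l) * X l).

Lemma dil_indep : alg_indep (fun l => C (c l) * X l).
Proof.
apply: (alg_indep_poly (w := fun l => mconst m (c l) * mvar k m l)
  (v' := fun l => C (c l)^-1 * X l)) => l; first by rewrite tofracM.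
by rewrite rmorphM reval_mconst reval_mvar mulrA -rconstM mulfV // rconst1 mul1r.
Qed.

Lemma dil_kendo : is_kendo dil.
Proof. exact: msubst_kendo dil_indep. Qed.

Lemma dil_rvar (l : 'I_m) : dil (X l) = C (c l) * X l.
Proof. exact: msubst_rvar dil_indep. Qed.

End Dilation.

Lemma dil_ext (c c' : 'I_m -> k) : c =1 c' -> dil c =1 dil c'.
Proof. by move=> cc'; apply: msubst_ext => l; rewrite cc'. Qed.

Lemma dil1 x : dil (fun _ => 1) x = x.
Proof.
have one_neq0 (l : 'I_m) : (1 : k) != 0 := oner_neq0 k.
move: x; apply: (kendo_eq (dil_kendo one_neq0) (kendo_id k m)) => l.
by rewrite dil_rvar // rconst1 mul1r.
Qed.

Lemma dil_mul (c c' : 'I_m -> k) x : (forall l, c l != 0) -> (forall l, c' l != 0) ->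
  dil c (dil c' x) = dil (fun l => c l * c' l) x.
Proof.
move=> c0 c'0; have cc'0 l : c l * c' l != 0 by rewrite mulf_neq0.
move: x; apply: (kendo_eq (kendo_comp (dil_kendo c0) (dil_kendo c'0)) (dil_kendo cc'0)) => l.
rewrite /comp (dil_rvar c'0) (kendo_mul (dil_kendo c0)) (kendo_const (dil_kendo c0)) !dil_rvar //.
by rewrite rconstM mulrCA mulrA.
Qed.

Lemma dilK (c c' : 'I_m -> k) : (forall l, c l * c' l = 1) -> cancel (dil c') (dil c).
Proof.
move=> cc' x; have [c0 c'0] : (forall l, c l != 0) /\ (forall l, c' l != 0).
  by split=> l; apply: contra_eq_neq (cc' l) => ->; rewrite ?mul0r ?mulr0 eq_sym oner_eq0.
by rewrite dil_mul // (dil_ext cc') dil1.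
Qed.

Lemma dil_bir (c : 'I_m -> k) : (forall l, c l != 0) -> is_bir (dil c).
Proof.
move=> c0; have cV0 l : (c l)^-1 != 0 by rewrite invr_eq0.
by apply: (kendo_bir (dil_kendo c0) (dil_kendo cV0)); apply: dilK => l; rewrite ?mulfV ?mulVf.
Qed.

Lemma iter_dil (c : 'I_m -> k) p x : (forall l, c l != 0) ->
  iter p (dil c) x = dil (fun l => c l ^+ p) x.
Proof.
move=> c0; elim: p => [|p IH]; first by rewrite (dil_ext (c' := fun _ => 1)) ?dil1.
have cp0 l : c l ^+ p != 0 by rewrite expf_neq0.
by rewrite iterS IH dil_mul //; apply: dil_ext => l; rewrite exprS.
Qed.

Definition permv (s : 'S_m) : K -> K := msubst (fun l => X (s l)).

Lemma permv_indep (s : 'S_m) : alg_indep (fun l => X (s l)).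
Proof.
apply: (alg_indep_poly (w := fun l => mvar k m (s l)) (v' := fun l => X (s^-1%g l))) => l //.
by rewrite reval_mvar permK.
Qed.

Lemma permv_kendo (s : 'S_m) : is_kendo (permv s).
Proof. exact: msubst_kendo (permv_indep (s := s)). Qed.

Lemma permv_rvar (s : 'S_m) (l : 'I_m) : permv s (X l) = X (s l).
Proof. exact: msubst_rvar (permv_indep (s := s)). Qed.

Lemma permvK (s : 'S_m) : cancel (permv s) (permv s^-1%g).
Proof.
apply: (kendo_eq (kendo_comp (permv_kendo _) (permv_kendo _)) (kendo_id k m)) => l.
by rewrite /comp !permv_rvar permK.
Qed.

Lemma permv_bir (s : 'S_m) : is_bir (permv s).
Proof.
apply: (kendo_bir (permv_kendo s) (permv_kendo s^-1%g) (permvK s)).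
by have := permvK s^-1%g; rewrite invgK.
Qed.

Lemma permv_dil (s : 'S_m) (c : 'I_m -> k) x : (forall l, c l != 0) ->
  permv s (dil c (permv s^-1%g x)) = dil (fun l => c (s^-1%g l)) x.
Proof.
move=> c0; have cs0 l : c (s^-1%g l) != 0 by [].
move: x; apply: (kendo_eq (kendo_comp (kendo_comp (permv_kendo _) (dil_kendo c0)) (permv_kendo _))
  (dil_kendo cs0)) => l.
rewrite /comp permv_rvar (dil_rvar c0) (kendo_mul (permv_kendo s)) (kendo_const (permv_kendo s)).
by rewrite permv_rvar permKV (dil_rvar cs0).
Qed.

Section Transvection.
Variables (i j : 'I_m).
Hypothesis hij : i != j.

Definition transv : K -> K := msubst (fun l => if l == j then X j * X i else X l).
Definition transv_inv : K -> K := msubst (fun l => if l == j then X j / X i else X l).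

Lemma transv_indep : alg_indep (fun l => if l == j then X j * X i else X l).
Proof.
apply: (alg_indep_poly (w := fun l => if l == j then mvar k m j * mvar k m i else mvar k m l)
  (v' := fun l => if l == j then X j / X i else X l)) => l.
  by case: eqP => _ //; rewrite tofracM.
case: eqP => [->|/eqP lj]; last by rewrite reval_mvar (negbTE lj).
by rewrite rmorphM !reval_mvar eqxx (negbTE hij) divfK ?rvar_neq0.
Qed.

Lemma transv_kendo : is_kendo transv.
Proof. exact: msubst_kendo transv_indep. Qed.

Lemma transv_rvar (l : 'I_m) : transv (X l) = if l == j then X j * X i else X l.
Proof. exact: msubst_rvar transv_indep. Qed.

Lemma transv_inv_indep : alg_indep (fun l => if l == j then X j / X i else X l).
Proof.
apply: (alg_indep_linv transv_kendo) => l; case: eqP => [->|/eqP lj].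
  by rewrite (kendo_div transv_kendo) !transv_rvar eqxx (negbTE hij) mulfK ?rvar_neq0.
by rewrite transv_rvar (negbTE lj).
Qed.

Lemma transv_inv_kendo : is_kendo transv_inv.
Proof. exact: msubst_kendo transv_inv_indep. Qed.

Lemma transv_inv_rvar (l : 'I_m) : transv_inv (X l) = if l == j then X j / X i else X l.
Proof. exact: msubst_rvar transv_inv_indep. Qed.

Lemma transvK : cancel transv transv_inv.
Proof.
apply: (kendo_eq (kendo_comp transv_inv_kendo transv_kendo) (kendo_id k m)) => l.
rewrite /comp transv_rvar; case: eqP => [->|/eqP lj]; last by rewrite transv_inv_rvar (negbTE lj).
by rewrite (kendo_mul transv_inv_kendo) !transv_inv_rvar eqxx (negbTE hij) divfK ?rvar_neq0.
Qed.

Lemma transv_invK : cancel transv_inv transv.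
Proof.
apply: (kendo_eq (kendo_comp transv_kendo transv_inv_kendo) (kendo_id k m)) => l.
rewrite /comp transv_inv_rvar; case: eqP => [->|/eqP lj]; last by rewrite transv_rvar (negbTE lj).
by rewrite (kendo_div transv_kendo) !transv_rvar eqxx (negbTE hij) mulfK ?rvar_neq0.
Qed.

Lemma transv_bir : is_bir transv.
Proof. exact: kendo_bir transv_kendo transv_inv_kendo transvK transv_invK. Qed.

Lemma transv_inv_bir : is_bir transv_inv.
Proof. exact: kendo_bir transv_inv_kendo transv_kendo transv_invK transvK. Qed.

Lemma transv_dil (c : 'I_m -> k) x : (forall l, c l != 0) ->
  transv (dil c (transv_inv x)) = dil (fun l => if l == j then c j / c i else c l) x.
Proof.
move=> c0; have c'0 l : (if l == j then c j / c i else c l) != 0.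
  by case: ifP; rewrite ?mulf_neq0 ?invr_eq0.
move: x; apply: (kendo_eq (kendo_comp (kendo_comp transv_kendo (dil_kendo c0)) transv_inv_kendo)
  (dil_kendo c'0)) => l.
rewrite /comp transv_inv_rvar (dil_rvar c'0); case: eqP => [->|/eqP lj]; last first.
  rewrite (dil_rvar c0) (kendo_mul transv_kendo) (kendo_const transv_kendo).
  by rewrite transv_rvar (negbTE lj).
rewrite (kendo_div (dil_kendo c0)) !(dil_rvar c0).
rewrite (kendo_div transv_kendo) !(kendo_mul transv_kendo).
rewrite !(kendo_const transv_kendo) !transv_rvar eqxx (negbTE hij) rconstM rconstV.
by rewrite [C (c i) * _]mulrC invfM !mulrA mulfK ?rvar_neq0 // mulrAC.
Qed.

Lemma transv_inv_dil (c : 'I_m -> k) x : (forall l, c l != 0) ->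
  transv_inv (dil c (transv x)) = dil (fun l => if l == j then c j * c i else c l) x.
Proof.
move=> c0; have c'0 l : (if l == j then c j * c i else c l) != 0 by case: ifP; rewrite ?mulf_neq0.
move: x; apply: (kendo_eq (kendo_comp (kendo_comp transv_inv_kendo (dil_kendo c0)) transv_kendo)
  (dil_kendo c'0)) => l.
rewrite /comp transv_rvar (dil_rvar c'0); case: eqP => [->|/eqP lj]; last first.
  rewrite (dil_rvar c0) (kendo_mul transv_inv_kendo) (kendo_const transv_inv_kendo).
  by rewrite transv_inv_rvar (negbTE lj).
rewrite (kendo_mul (dil_kendo c0)) !(dil_rvar c0) !(kendo_mul transv_inv_kendo).
rewrite !(kendo_const transv_inv_kendo) !transv_inv_rvar eqxx (negbTE hij) rconstM.
by rewrite mulrACA divfK ?rvar_neq0.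
Qed.

End Transvection.

Lemma tperm_dil (a b : 'I_m) (c : 'I_m -> k) x : (forall l, c l != 0) ->
  permv (tperm a b) (dil c (permv (tperm a b) x)) = dil (fun l => c (tperm a b l)) x.
Proof. by move=> c0; have := permv_dil (tperm a b) x c0; rewrite tpermV. Qed.

Definition scale_at (l : 'I_m) (a : k) : K -> K := dil (fun l' => if l' == l then a else 1).

Lemma tperm_scale_at (l j : 'I_m) (a : k) x : a != 0 ->
  permv (tperm l j) (scale_at j a (permv (tperm l j) x)) = scale_at l a x.
Proof.
move=> a0; have c0 l' : (if l' == j then a else 1) != 0 by case: ifP; rewrite ?oner_neq0.
by rewrite /scale_at tperm_dil //; apply: dil_ext => l'; rewrite (canF_eq (tpermK l j)) tpermR.
Qed.

Lemma scale_at_prod (c : 'I_m -> k) x : (forall l, c l != 0) ->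
  foldr (fun l f => scale_at l (c l) \o f) id (enum 'I_m) x = dil c x.
Proof.
move=> c0; have : uniq (enum 'I_m) := enum_uniq _.
have -> : dil c x = dil (fun l => if l \in enum 'I_m then c l else 1) x.
  by apply: dil_ext => l; rewrite mem_enum.
elim: (enum 'I_m) => [_|l s IH /andP [ls us]] /=; first by rewrite -[LHS]dil1; apply: dil_ext.
rewrite IH // /scale_at dil_mul => [|l'|l']; [|by case: ifP; rewrite ?oner_neq0 ..].
apply: dil_ext => l'; rewrite in_cons; have [->|] := eqVneq l' l; last by rewrite mul1r.
by rewrite (negbTE ls) mulr1.
Qed.

Definition dilz (a : k) (e : 'I_m -> int) : K -> K := dil (fun l => a ^ e l).

Section ExponentForm.
Variables (a : k) (i j : 'I_m).
Hypotheses (a0 : a != 0) (hij : i != j).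

Let expz_neq0 (e : 'I_m -> int) l : a ^ e l != 0 := expfz_neq0 _ a0.

Lemma dilz_ext e e' : e =1 e' -> dilz a e =1 dilz a e'.
Proof. by move=> ee'; apply: dil_ext => l; rewrite ee'. Qed.

Lemma dilz_mul e e' x : dilz a e (dilz a e' x) = dilz a (fun l => e l + e' l) x.
Proof. by rewrite /dilz dil_mul //; apply: dil_ext => l; rewrite expfzDr. Qed.

Lemma tperm_dilz e x :
  permv (tperm i j) (dilz a e (permv (tperm i j) x)) = dilz a (fun l => e (tperm i j l)) x.
Proof. exact: tperm_dil. Qed.

Lemma transv_dilz e x :
  transv i j (dilz a e (transv_inv i j x)) = dilz a (fun l => if l == j then e j - e i else e l) x.
Proof.
rewrite /dilz transv_dil //; apply: dil_ext => l.
by case: ifP => // _; rewrite expfzDr // invr_expz.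
Qed.

Lemma transv_inv_dilz e x :
  transv_inv i j (dilz a e (transv i j x)) = dilz a (fun l => if l == j then e j + e i else e l) x.
Proof.
rewrite /dilz transv_inv_dil //; apply: dil_ext => l.
by case: ifP => // _; rewrite expfzDr.
Qed.

End ExponentForm.
End MonomialMaps.

(** * A hyperbolic monomial map *)

Definition cat_map (v : int * int) : int * int := (v.1 + v.2, v.2 + (v.1 + v.2)).
Definition cat_map_inv (v : int * int) : int * int := (v.1 - (v.2 - v.1), v.2 - v.1).

(* (p, q) |-> (p + q, -q) fixes (1, 0) and conjugates cat_map_inv to cat_map. *)
Lemma iter_cat_map t :
  iter t cat_map (1, 0) = let v := iter t cat_map_inv (1, 0) in (v.1 + v.2, - v.2).
Proof.
elim: t => [//|t IH]; rewrite !iterS IH /=.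
by case: (iter t cat_map_inv (1, 0)) => p q; rewrite /cat_map /=; congr (_, _); lia.
Qed.

Lemma iter_cat_map_inv_bounds t :
  let v := iter t cat_map_inv (1, 0) in [/\ v.2 <= 0, 0 <= v.1 + v.2 & (2 ^ t)%N%:Z <= v.1].
Proof.
elim: t => [//|t]; rewrite iterS /=; case: (iter t cat_map_inv (1, 0)) => p q /= [q0 pq e].
by rewrite expnS PoszM; split; lia.
Qed.

Definition cat_exp (t : nat) : nat :=
  let v := iter t cat_map_inv (1, 0) in absz (2 * v.1 + v.2).

Lemma cat_exp_sum t :
  (iter t cat_map_inv (1, 0)).1 + (iter t cat_map (1, 0)).1 = (cat_exp t)%:Z /\
  (iter t cat_map_inv (1, 0)).2 + (iter t cat_map (1, 0)).2 = 0.
Proof.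
rewrite iter_cat_map /cat_exp; have := iter_cat_map_inv_bounds t.
by case: (iter t cat_map_inv (1, 0)) => p q /= [q0 pq _]; split; lia.
Qed.

Lemma cat_exp_ge t : (2 ^ t <= cat_exp t)%N.
Proof.
rewrite -lez_nat /cat_exp; have := iter_cat_map_inv_bounds t.
by case: (iter t cat_map_inv (1, 0)) => p q /= [q0 pq]; lia.
Qed.

Section HyperbolicMap.
Variables (k : fieldType) (m : nat) (i j : 'I_m).
Hypothesis hij : i != j.
Local Notation K := (ratfun k m).
Local Notation swap := (@permv k m (tperm i j)).

Definition hyp_step (x : K) : K := transv i j (swap (transv i j (swap x))).
Definition hyp_step_inv (x : K) : K := swap (transv_inv i j (swap (transv_inv i j x))).

Definition pairv (v : int * int) (l : 'I_m) : int :=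
  if l == j then v.1 else if l == i then v.2 else 0.

Lemma tperm_dilz_pair (a : k) v x : a != 0 ->
  swap (dilz a (pairv v) (swap x)) = dilz a (pairv (v.2, v.1)) x.
Proof.
move=> a0; rewrite tperm_dilz //; apply: dilz_ext => l; rewrite /pairv.
have [->|lj] := eqVneq l j; first by rewrite tpermR (negbTE hij) !eqxx.
have [->|li] := eqVneq l i; first by rewrite tpermL eqxx.
by rewrite tpermD ?(negbTE lj) ?(negbTE li) // eq_sym.
Qed.

Lemma transv_dilz_pair (a : k) v x : a != 0 ->
  transv i j (dilz a (pairv v) (transv_inv i j x)) = dilz a (pairv (v.1 - v.2, v.2)) x.
Proof.
move=> a0; rewrite transv_dilz //; apply: dilz_ext => l; rewrite /pairv.
by case: eqP => // _; rewrite eqxx (negbTE hij) eqxx.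
Qed.

Lemma transv_inv_dilz_pair (a : k) v x : a != 0 ->
  transv_inv i j (dilz a (pairv v) (transv i j x)) = dilz a (pairv (v.1 + v.2, v.2)) x.
Proof.
move=> a0; rewrite transv_inv_dilz //; apply: dilz_ext => l; rewrite /pairv.
by case: eqP => // _; rewrite eqxx (negbTE hij) eqxx.
Qed.

Lemma hyp_step_dilz (a : k) v x : a != 0 ->
  hyp_step (dilz a (pairv v) (hyp_step_inv x)) = dilz a (pairv (cat_map_inv v)) x.
Proof.
move=> a0; rewrite /hyp_step /hyp_step_inv.
by rewrite tperm_dilz_pair // transv_dilz_pair // tperm_dilz_pair // transv_dilz_pair.
Qed.

Lemma hyp_step_inv_dilz (a : k) v x : a != 0 ->
  hyp_step_inv (dilz a (pairv v) (hyp_step x)) = dilz a (pairv (cat_map v)) x.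
Proof.
move=> a0; rewrite /hyp_step /hyp_step_inv.
by rewrite transv_inv_dilz_pair // tperm_dilz_pair // transv_inv_dilz_pair // tperm_dilz_pair.
Qed.

Lemma dilz_pair_scale_at (a : k) (N : nat) x : dilz a (pairv (N%:Z, 0)) x = scale_at j (a ^+ N) x.
Proof.
by apply: dil_ext => l; rewrite /pairv; case: ifP => // _; case: ifP.
Qed.

Lemma iter_hyp_step_dilz t (a : k) v x : a != 0 ->
  iter t hyp_step (dilz a (pairv v) (iter t hyp_step_inv x))
  = dilz a (pairv (iter t cat_map_inv v)) x.
Proof.
move=> a0; elim: t x => [//|t IH] x.
by rewrite [iter t.+1 hyp_step_inv x]iterSr iterS IH hyp_step_dilz // [in RHS]iterS.
Qed.

Lemma iter_hyp_step_inv_dilz t (a : k) v x : a != 0 ->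
  iter t hyp_step_inv (dilz a (pairv v) (iter t hyp_step x))
  = dilz a (pairv (iter t cat_map v)) x.
Proof.
move=> a0; elim: t x => [//|t IH] x.
by rewrite [iter t.+1 hyp_step x]iterSr iterS IH hyp_step_inv_dilz // [in RHS]iterS.
Qed.

Lemma hyp_block t (a : k) x : a != 0 ->
  iter t hyp_step (dilz a (pairv (1, 0))
    (iter t hyp_step_inv (iter t hyp_step_inv (dilz a (pairv (1, 0)) (iter t hyp_step x)))))
  = dilz a (pairv ((cat_exp t)%:Z, 0)) x.
Proof.
move=> a0; rewrite iter_hyp_step_inv_dilz // iter_hyp_step_dilz // dilz_mul //.
have [e1 e2] := cat_exp_sum t; apply: dilz_ext => l; rewrite /pairv.
by case: ifP => _ //; case: ifP => _ //; rewrite addr0.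
Qed.

End HyperbolicMap.

(** * Words in a finite set of generators *)

Inductive gen (m : nat) : predArgType :=
  GOne | GTransv | GTransvInv | GSwap of 'I_m | GScale of 'I_m | GScaleInv of 'I_m.
Arguments GOne {m}.
Arguments GTransv {m}.
Arguments GTransvInv {m}.

Section GenFinType.
Variable m : nat.

Definition gen_code (g : gen m) : option bool + ('I_m + ('I_m + 'I_m)) :=
  match g with
  | GOne => inl None | GTransv => inl (Some true) | GTransvInv => inl (Some false)
  | GSwap l => inr (inl l) | GScale l => inr (inr (inl l)) | GScaleInv l => inr (inr (inr l))
  end.

Definition gen_decode (c : option bool + ('I_m + ('I_m + 'I_m))) : gen m :=
  match c with
  | inl None => GOne | inl (Some true) => GTransv | inl (Some false) => GTransvInv
  | inr (inl l) => GSwap l | inr (inr (inl l)) => GScale l | inr (inr (inr l)) => GScaleInv l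
  end.

Lemma gen_codeK : cancel gen_code gen_decode.
Proof. by case. Qed.

End GenFinType.

HB.instance Definition _ m := Finite.copy (gen m) (can_type (@gen_codeK m)).

Lemma size_flatten_map_const (T U : Type) (f : T -> seq U) (s : seq T) c :
  (forall x, size (f x) = c) -> size (flatten (map f s)) = (size s * c)%N.
Proof. by move=> fc; elim: s => //= x s IH; rewrite size_cat fc IH mulSn. Qed.

Section WordShapes.
Variables (m : nat) (i : 'I_m).

Definition hyp_word : seq (gen m) := [:: GTransv; GSwap i; GTransv; GSwap i].
Definition hyp_word_inv : seq (gen m) := [:: GSwap i; GTransvInv; GSwap i; GTransvInv].

Definition block_word (t : nat) (l : 'I_m) : seq (gen m) :=
  GSwap l :: flatten (nseq t hyp_word) ++ GScale l :: flatten (nseq t.*2 hyp_word_inv) ++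
  GScale l :: flatten (nseq t hyp_word) ++ [:: GSwap l].

Lemma size_block_word t l : size (block_word t l) = (4 + 16 * t)%N.
Proof.
rewrite /=; do !rewrite size_cat /=.
by rewrite !size_flatten /shape !map_nseq !sumn_nseq -mul2n /=; lia.
Qed.

Definition unit_word : seq (gen m) :=
  flatten [seq [:: GSwap l; GScale l; GSwap l] | l <- enum 'I_m].
Definition power_word (t : nat) : seq (gen m) := flatten [seq block_word t l | l <- enum 'I_m].

Lemma size_power_word t : size (power_word t) = (m * (4 + 16 * t))%N.
Proof. by rewrite (size_flatten_map_const _ (size_block_word t)) size_enum_ord. Qed.

End WordShapes.

Section Words.
Variables (k : fieldType) (m : nat) (i j : 'I_m) (u : 'I_m -> k).
Hypotheses (hij : i != j) (u0 : forall l, u l != 0).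
Local Notation K := (ratfun k m).

Definition gen_act (g : gen m) : K -> K :=
  match g with
  | GOne => id
  | GTransv => transv i j
  | GTransvInv => transv_inv i j
  | GSwap l => permv (tperm l j)
  | GScale l => scale_at j (u l)
  | GScaleInv l => scale_at j (u l)^-1
  end.

Definition gen_inv (g : gen m) : gen m :=
  match g with
  | GOne => GOne | GTransv => GTransvInv | GTransvInv => GTransv
  | GSwap l => GSwap l | GScale l => GScaleInv l | GScaleInv l => GScale l
  end.

Lemma gen_act_bir g : is_bir (gen_act g).
Proof.
case: g => [|||l|l|l] /=.
- by split=> //; exists id.
- exact: transv_bir.
- exact: transv_inv_bir.
- exact: permv_bir.
- by apply: dil_bir => l'; case: ifP; rewrite ?oner_neq0.
- by apply: dil_bir => l'; case: ifP; rewrite ?oner_neq0 ?invr_eq0.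
Qed.

Lemma gen_actK g : cancel (gen_act g) (gen_act (gen_inv g)).
Proof.
case: g => [|||l|l|l] x //=.
- exact: transvK.
- exact: transv_invK.
- by have := permvK (tperm l j) x; rewrite tpermV.
- by apply: dilK => l'; case: ifP => _; rewrite ?mulVf ?mulr1.
- by apply: dilK => l'; case: ifP => _; rewrite ?mulfV ?mulr1.
Qed.

Lemma gen_actVK g : cancel (gen_act (gen_inv g)) (gen_act g).
Proof. by have := gen_actK (gen_inv g); case: g. Qed.

Definition eval_word (w : seq (gen m)) : K -> K := foldr (fun g f => gen_act g \o f) id w.

Lemma word_eval (w : seq (gen m)) x :
  word (fun n => gen_act (enum_val n)) (map enum_rank w) x = eval_word w x.
Proof. by elim: w => //= g w ->; rewrite enum_rankK. Qed.

Lemma eval_word_cat w1 w2 x : eval_word (w1 ++ w2) x = eval_word w1 (eval_word w2 x).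
Proof. by elim: w1 => //= g w1 ->. Qed.

Lemma eval_word_nseq t w x : eval_word (flatten (nseq t w)) x = iter t (eval_word w) x.
Proof. by elim: t => //= t IH; rewrite eval_word_cat IH. Qed.

Lemma eval_hyp_word : eval_word (hyp_word i) =1 hyp_step i j.
Proof. by []. Qed.

Lemma eval_hyp_word_inv : eval_word (hyp_word_inv i) =1 hyp_step_inv i j.
Proof. by []. Qed.

Lemma eval_block_word t l x : eval_word (block_word i t l) x = scale_at l (u l ^+ cat_exp t) x.
Proof.
rewrite /block_word /=; do !rewrite eval_word_cat /=.
rewrite !eval_word_nseq -addnn iterD !(eq_iter eval_hyp_word) !(eq_iter eval_hyp_word_inv).
rewrite -!(dilz_pair_scale_at i j (u l) 1) hyp_block // dilz_pair_scale_at.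
by rewrite tperm_scale_at ?expf_neq0.
Qed.

Lemma eval_word_scale_at (f : 'I_m -> seq (gen m)) (c : 'I_m -> k) x :
  (forall l, c l != 0) -> (forall l y, eval_word (f l) y = scale_at l (c l) y) ->
  eval_word (flatten [seq f l | l <- enum 'I_m]) x = dil c x.
Proof.
move=> c0 fc; rewrite -scale_at_prod //.
by elim: (enum 'I_m) x => //= l s IH x; rewrite eval_word_cat fc IH.
Qed.

Lemma eval_unit_word x : eval_word (unit_word m) x = dil u x.
Proof. by apply: eval_word_scale_at => // l y; apply: tperm_scale_at. Qed.

Lemma eval_power_word t x : eval_word (power_word i t) x = dil (fun l => u l ^+ cat_exp t) x.
Proof.
apply: eval_word_scale_at => [l|l y]; first by rewrite expf_neq0.
exact: eval_block_word.
Qed.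

End Words.


Theorem lemma3p2 (k : fieldType) (m : nat) (hm : (2 <= m)%N)
    (uu : 'I_m -> k) (huu : forall i, uu i != 0)
    (u : ratfun k m -> ratfun k m) (hbir : is_bir u)
    (hdiag : forall i : 'I_m, u (rvar k m i) = rconst m (uu i) * rvar k m i) :
  exists (N : nat) (S : 'I_N -> ratfun k m -> ratfun k m),
    [/\ forall j, is_bir (S j),
        exists j, forall x, S j x = x,
        forall j, exists j', forall x, S j' (S j x) = x /\ S j (S j' x) = x,
        exists w : seq 'I_N, forall x, u x = word S w x &
        exists C C' C'' : nat, [/\ (0 < C)%N, (0 < C')%N, (0 < C'')%N &
          forall n : nat, exists (p : nat) (w : seq 'I_N),
            [/\ (size w <= C' * n)%N,
                forall x, iter p u x = word S w x &
                (3 ^ n <= C * p + C'')%N]]].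
Proof.
pose i : 'I_m := Ordinal (ltnW hm); pose j : 'I_m := Ordinal hm.
have hij : i != j by [].
have u_dil : u =1 dil uu.
  by apply: (kendo_eq (bir_kendo hbir) (dil_kendo huu)) => l; rewrite hdiag dil_rvar.
exists #|gen m|, (fun n => gen_act i j uu (enum_val n)); split.
- by move=> n; apply: gen_act_bir.
- by exists (enum_rank GOne) => x; rewrite enum_rankK.
- move=> n; exists (enum_rank (gen_inv (enum_val n))) => x; rewrite enum_rankK.
  by split; [apply: gen_actK | apply: gen_actVK].
- by exists (map enum_rank (unit_word m)) => x; rewrite word_eval eval_unit_word // u_dil.
exists 1%N, (36 * m)%N, 1%N; split => //; first by lia.
case=> [|n]; first by exists 0%N, [::].
exists (cat_exp n.+1.*2), (map enum_rank (power_word i n.+1.*2)); split.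
- by rewrite size_map size_power_word; nia.
- by move=> x; rewrite word_eval eval_power_word // (eq_iter u_dil) iter_dil.
- rewrite mul1n (leq_trans _ (leq_addr _ _)) // (leq_trans _ (cat_exp_ge _)) //.
  by rewrite -mul2n expnM leq_exp2r.
Qed.
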